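(* Assume the WLPR scheme $S_{d,\mathbf{w}^\lambda}$ is well defined, with mask $\mathbf{a}=(a_m)_{m\in\mathbb{Z}}$. Then $S_{d,\mathbf{w}^\lambda}$ is odd-symmetric: $a_m=a_{-m}$ for all $m\in\mathbb{Z}$.
   Context: Let $\phi:[0,1]\to[0,1]$ be non-increasing with $\phi(0)=1$, $\omega(x)=\phi(|x|)$ for $|x|\le1$ and $0$ otherwise, $\lambda\in(0,\infty)\setminus\mathbb{N}$, and $w^\lambda_m=\omega(m/\lambda)$, $m\in\mathbb{Z}$. Let $d\ge0$ be an integer and $\Pi_d$ the real polynomials of degree at most $d$. For $i\in\{0,1\}$ let $M_i=\{m\in\mathbb{Z}: m\equiv i\pmod 2,\ |m|<\lambda\}$. The weighted local polynomial regression scheme $S_{d,\mathbf{w}^\lambda}$ maps a real sequence $\mathbf{f}=(f_j)_{j\in\mathbb{Z}}$ to $(S\mathbf{f})_{2j+i}=\hat p(0)$ ($i\in\{0,1\}$, $j\in\mathbb{Z}$), where $\hat p$ minimizes $\sum_{m\in M_i} w^\lambda_m(f_{j+(m+i)/2}-p(m))^2$ over $p\in\Pi_d$; ''well defined'' means $\hat p(0)$ does not depend on the choice of minimizer. The scheme is then linear, $(S\mathbf{f})_{2j+i}=\sum_{m\in M_i}a_m f_{j+(m+i)/2}$, and its mask is $\mathbf{a}=(a_m)_{m\in\mathbb{Z}}$ with $a_m=0$ for $|m|\ge\lambda$. *)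

From mathcomp Require Import all_boot all_order all_algebra.
From mathcomp Require Import reals.
Set Implicit Arguments. Unset Strict Implicit. Unset Printing Implicit Defensive.
Import Order.TTheory GRing.Theory Num.Theory.
Local Open Scope ring_scope.

Section WLPR.
Variable R : realType.

Definition omega (phi : R -> R) (x : R) : R :=
  if `|x| <= 1 then phi `|x| else 0.

Definition wgt (phi : R -> R) (lambda : R) (m : int) : R :=
  omega phi (m%:~R / lambda).

(* M_i = { m in Z : m = i mod 2, |m| < lambda }, listed explicitly as a
   finite sequence (every such m satisfies |m| <= trunc lambda). *)
Definition Mset (lambda : R) (i : bool) : seq int :=
  let N := Num.truncn lambda in
  [seq m <- [seq (k%:Z - N%:Z)%R | k <- iota 0 (N.*2.+1)]
     | (modz m 2 == (i : nat)%:Z) && ((`|m|%:~R : R) < lambda)].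

(* weighted least squares objective for output index 2j+i *)
Definition wlpr_obj (phi : R -> R) (lambda : R) (i : bool) (j : int)
  (f : int -> R) (p : {poly R}) : R :=
  \sum_(m <- Mset lambda i)
     wgt phi lambda m * (f (j + divz (m + (i : nat)%:Z) 2) - p.[m%:~R]) ^+ 2.

Definition wlpr_minimizer (d : nat) (phi : R -> R) (lambda : R) (i : bool)
  (j : int) (f : int -> R) (p : {poly R}) : Prop :=
  (size p <= d.+1)%N /\
  forall q : {poly R}, (size q <= d.+1)%N ->
    wlpr_obj phi lambda i j f p <= wlpr_obj phi lambda i j f q.

Definition wlpr_well_defined (d : nat) (phi : R -> R) (lambda : R) : Prop :=
  forall (i : bool) (j : int) (f : int -> R) (p q : {poly R}),
    wlpr_minimizer d phi lambda i j f p ->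
    wlpr_minimizer d phi lambda i j f q -> p.[0] = q.[0].

(* a is the mask of the scheme:
   (S f)_{2j+i} = sum_{m in M_i} a_m f_{j+(m+i)/2}, and a_m = 0 for |m| >= lambda *)
Definition wlpr_mask (d : nat) (phi : R -> R) (lambda : R) (a : int -> R) : Prop :=
  (forall m : int, lambda <= `|m|%:~R -> a m = 0) /\
  forall (i : bool) (j : int) (f : int -> R) (p : {poly R}),
    wlpr_minimizer d phi lambda i j f p ->
    p.[0] = \sum_(m <- Mset lambda i) a m * f (j + divz (m + (i : nat)%:Z) 2).

End WLPR.

(* The mask coefficient a_m is the value at 0 of a fitted polynomial for the
   delta sequence sitting at the stencil point m.  The weights and the stencils
   M_i are invariant under m |-> -m, so substituting -X in that minimizer gives a
   minimizer for the delta at -m, with the same value at 0.  Minimizers exist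
   because the weighted normal equations are always solvable (Gram-Schmidt). *)

From mathcomp Require Import all_boot all_order all_algebra zify ring.
From mathcomp Require Import reals.
Set Implicit Arguments. Unset Strict Implicit. Unset Printing Implicit Defensive.
Import Order.TTheory GRing.Theory Num.Theory.
Local Open Scope ring_scope.

Lemma size_sub_coef_scale (R : nzRingType) (k : nat) (q e : {poly R}) :
  (size q <= k.+1)%N -> (size e <= k)%N ->
  (size (q - q`_k *: ('X^k - e))%R <= k)%N.
Proof.
move=> hq he; apply/leq_sizeP => j; rewrite leq_eqVlt => /orP [/eqP <-|ltkj].
  by rewrite coefB coefZ coefB coefXn eqxx (nth_default 0 he) subr0 mulr1 subrr.
rewrite coefB coefZ coefB coefXn gtn_eqF // (nth_default 0 (leq_trans hq ltkj)).
by rewrite (nth_default 0 (leq_trans he (ltnW ltkj))) subrr mulr0 subrr.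
Qed.

Section WeightedLeastSquares.
Variables (R : realFieldType) (I : eqType) (s : seq I) (x w : I -> R).
Hypothesis w_ge0 : forall k, 0 <= w k.

Definition wdot (u v : I -> R) : R := \sum_(k <- s) w k * u k * v k.

Definition wls_err (y : I -> R) (p : {poly R}) : R :=
  \sum_(k <- s) w k * (y k - p.[x k]) ^+ 2.

Definition wls_normal (n : nat) (y : I -> R) (p : {poly R}) : Prop :=
  forall q : {poly R}, (size q <= n)%N ->
    wdot (fun k => y k - p.[x k]) (fun k => q.[x k]) = 0.

Lemma wdot_self_ge0 (v : I -> R) : 0 <= wdot v v.
Proof. by apply: sumr_ge0 => k _; rewrite -mulrA mulr_ge0 // -expr2 sqr_ge0. Qed.

Lemma wdot_eq0_of_self (u v : I -> R) : wdot v v = 0 -> wdot u v = 0.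
Proof.
move/eqP; rewrite psumr_eq0 => [/allP vv0|k _]; last first.
  by rewrite -mulrA mulr_ge0 // -expr2 sqr_ge0.
rewrite /wdot big_seq big1 // => k /vv0 /eqP /eqP.
by rewrite -mulrA !mulf_eq0 orbb => /orP [] /eqP ->; rewrite ?mul0r ?mulr0.
Qed.

Lemma wls_normal_min (n : nat) (y : I -> R) (p : {poly R}) :
  (size p <= n)%N -> wls_normal n y p ->
  forall q : {poly R}, (size q <= n)%N -> wls_err y p <= wls_err y q.
Proof.
move=> hp np q hq.
have hpq : (size (p - q)%R <= n)%N.
  by apply: leq_trans (size_polyD _ _) _; rewrite geq_max hp size_polyN hq.
set r := fun k => y k - p.[x k]; set v := fun k => (p - q).[x k].
have -> : wls_err y q = wls_err y p + 2 * wdot r v + wdot v v.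
  rewrite /wls_err /wdot mulr_sumr -!big_split /=.
  by apply: eq_bigr => k _; rewrite /r /v hornerD hornerN; ring.
by rewrite np // mulr0 addr0 lerDl wdot_self_ge0.
Qed.

(* Gram-Schmidt step: S = 'X^k - e, with e the fit of 'X^k of size at most k,
   is orthogonal to all polynomials of size at most k, so correcting the
   residual along S settles the new top coefficient; when <S, S> = 0 the
   correction is vacuous by [wdot_eq0_of_self]. *)
Lemma wls_normal_exists (n : nat) (y : I -> R) :
  exists2 p : {poly R}, (size p <= n)%N & wls_normal n y p.
Proof.
elim: n y => [|k IH] y.
  exists 0 => [|q]; first by rewrite size_poly0.
  rewrite leqn0 size_poly_eq0 => /eqP ->.
  by apply: big1 => i _; rewrite horner0 mulr0.
have [p hp np] := IH y.
have [e he ne] := IH (fun i => x i ^+ k).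
set S := 'X^k - e.
have hS : (size S <= k.+1)%N.
  apply: leq_trans (size_polyD _ _) _.
  by rewrite geq_max size_polyXn leqnn size_polyN (leq_trans he).
set Sx := fun i => S.[x i].
have nS : forall q : {poly R}, (size q <= k)%N -> wdot Sx (fun i => q.[x i]) = 0.
  by move=> q hq; rewrite -(ne q hq); apply: eq_bigr => i _; rewrite /Sx !hornerE.
set r := fun i => y i - p.[x i].
set t := wdot r Sx / wdot Sx Sx.
have rS : wdot r Sx = t * wdot Sx Sx.
  have [SS0|SSn0] := eqVneq (wdot Sx Sx) 0; last by rewrite mulfVK.
  by rewrite SS0 mulr0 wdot_eq0_of_self.
exists (p + t *: S).
  apply: leq_trans (size_polyD _ _) _.
  by rewrite geq_max (leq_trans hp) // (leq_trans (size_scale_leq _ _)).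
move=> q hq; set c := q`_k; set q' := q - c *: S.
have hq' : (size q' <= k)%N by apply: size_sub_coef_scale.
have -> : wdot (fun i => y i - (p + t *: S).[x i]) (fun i => q.[x i]) =
    wdot r (fun i => q'.[x i]) - t * wdot Sx (fun i => q'.[x i])
    + c * (wdot r Sx - t * wdot Sx Sx).
  rewrite /wdot !mulr_sumr -!sumrB mulr_sumr -big_split /=.
  by apply: eq_bigr => i _; rewrite /r /Sx /q' !(hornerD, hornerN, hornerZ); ring.
by rewrite np // nS // rS subrr !mulr0 subrr add0r.
Qed.

End WeightedLeastSquares.

Section WLPRScheme.
Variables (R : realType) (phi : R -> R) (lambda : R).
Hypothesis phi_range : forall x : R, 0 <= x <= 1 -> 0 <= phi x <= 1.

Lemma wgt_ge0 (m : int) : 0 <= wgt phi lambda m.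
Proof.
rewrite /wgt /omega; case: ifP => // m_le1.
by have /phi_range /andP [] : 0 <= `|m%:~R / lambda| <= 1 by rewrite normr_ge0.
Qed.

Lemma wgtN (m : int) : wgt phi lambda (- m) = wgt phi lambda m.
Proof. by rewrite /wgt /omega mulrNz mulNr normrN. Qed.

Lemma mem_Mset (i : bool) (m : int) :
  (m \in Mset lambda i) = (modz m 2 == (i : nat)%:Z) && (`|m|%:~R < lambda).
Proof.
rewrite /Mset mem_filter; apply: andb_idr => /andP [_ m_lt]; apply/mapP.
have lambda_ge0 : 0 <= lambda by apply: le_trans (ltW m_lt).
have : (absz m <= Num.truncn lambda)%N by rewrite truncn_ge_nat // ltW.
by exists (absz (m + (Num.truncn lambda)%:Z)); rewrite ?mem_iota; lia.
Qed.

Lemma Mset_uniq (i : bool) : uniq (Mset lambda i).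
Proof. by rewrite filter_uniq // map_inj_uniq ?iota_uniq // => k l; lia. Qed.

Lemma MsetN (i : bool) (m : int) : (- m \in Mset lambda i) = (m \in Mset lambda i).
Proof. by rewrite !mem_Mset normrN; congr (_ && _); apply/eqP/eqP; lia. Qed.

Lemma big_Mset_opp (i : bool) (F : int -> R) :
  \sum_(m <- Mset lambda i) F (- m) = \sum_(m <- Mset lambda i) F m.
Proof.
rewrite -(big_map -%R xpredT F); apply/perm_big/uniq_perm.
- by rewrite map_inj_uniq ?Mset_uniq //; apply: oppr_inj.
- exact: Mset_uniq.
by move=> m; rewrite -{1}(opprK m) (mem_map oppr_inj) MsetN.
Qed.

Lemma Mset_halfK (i : bool) (m : int) : m \in Mset lambda i ->
  2 * divz (m + (i : nat)%:Z) 2 - (i : nat)%:Z = m.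
Proof. by rewrite mem_Mset => /andP [/eqP m_mod _]; case: i m_mod => /=; lia. Qed.

Lemma wlpr_minimizer_exists (d : nat) (i : bool) (j : int) (f : int -> R) :
  exists p : {poly R}, wlpr_minimizer d phi lambda i j f p.
Proof.
have [p hp np] := wls_normal_exists (Mset lambda i) (fun m : int => m%:~R) wgt_ge0 d.+1
  (fun m => f (j + divz (m + (i : nat)%:Z) 2)).
by exists p; split=> // q hq; exact (wls_normal_min wgt_ge0 hp np hq).
Qed.

(* The data index n = (m + i) / 2 becomes i - n exactly when m becomes -m. *)
Lemma wlpr_obj_reflect (i : bool) (f : int -> R) (r : {poly R}) :
  wlpr_obj phi lambda i 0 (fun n => f ((i : nat)%:Z - n)) r =
  wlpr_obj phi lambda i 0 f (r \Po - 'X).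
Proof.
rewrite /wlpr_obj -big_Mset_opp; apply: eq_big_seq => m.
rewrite -MsetN => /Mset_halfK m_half.
rewrite wgtN horner_comp hornerN hornerX mulrNz.
by congr (_ * (f _ - _) ^+ 2); lia.
Qed.

Lemma wlpr_minimizer_reflect (d : nat) (i : bool) (f : int -> R) (p : {poly R}) :
  wlpr_minimizer d phi lambda i 0 f p ->
  wlpr_minimizer d phi lambda i 0 (fun n => f ((i : nat)%:Z - n)) (p \Po - 'X).
Proof.
have size_compN : forall q : {poly R}, size (q \Po - 'X) = size q.
  by move=> q; rewrite size_comp_poly2 // size_polyN size_polyX.
have compNK : forall q : {poly R}, (q \Po - 'X) \Po - 'X = q.
  by move=> q; rewrite -comp_polyA raddfN /= comp_polyX opprK comp_polyXr.
case=> hp pmin; split=> [|q hq]; first by rewrite size_compN.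
by rewrite !wlpr_obj_reflect compNK pmin ?size_compN.
Qed.

Lemma wlpr_mask_delta (d : nat) (a : int -> R) (i : bool) (j m0 : int)
    (f : int -> R) (p : {poly R}) :
  wlpr_mask d phi lambda a -> m0 \in Mset lambda i ->
  (forall m, m \in Mset lambda i -> f (j + divz (m + (i : nat)%:Z) 2) = (m == m0)%:R) ->
  wlpr_minimizer d phi lambda i j f p -> p.[0] = a m0.
Proof.
move=> [_ arep] m0M f_delta /arep ->.
rewrite (eq_big_seq (fun m => (m == m0)%:R * a m)); last first.
  by move=> m mM; rewrite f_delta // mulrC.
rewrite (bigD1_seq m0) ?Mset_uniq //= eqxx mul1r big1 ?addr0 // => m.
by move/negbTE ->; rewrite mul0r.
Qed.

End WLPRScheme.

Theorem lemma3p5 (R : realType) (phi : R -> R) (lambda : R) (d : nat)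
  (phi_range : forall x : R, 0 <= x <= 1 -> 0 <= phi x <= 1)
  (phi_noninc : forall x y : R, 0 <= x -> x <= y -> y <= 1 -> phi y <= phi x)
  (phi0 : phi 0 = 1)
  (lambda_pos : 0 < lambda)
  (lambda_notnat : forall n : nat, lambda != n%:R)
  (wd : wlpr_well_defined d phi lambda)
  (a : int -> R) (amask : wlpr_mask d phi lambda a) :
  forall m : int, a m = a (- m).
Proof.
move=> m0; have [a_out _] := amask.
have [m0_ge|m0_lt] := lerP lambda `|m0|%:~R; first by rewrite !a_out ?normrN.
set i : bool := modz m0 2 != 0.
have m0M : m0 \in Mset lambda i.
  by rewrite mem_Mset m0_lt andbT /i; case: eqP => /= m0_mod; apply/eqP; lia.
pose f : int -> R := fun n => (2 * n - (i : nat)%:Z == m0)%:R.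
have [p pmin] := wlpr_minimizer_exists lambda phi_range d i 0 f.
rewrite -(wlpr_mask_delta amask m0M _ pmin); last first.
  by move=> m /Mset_halfK mK; rewrite /f add0r mK.
rewrite -(wlpr_mask_delta amask _ _ (wlpr_minimizer_reflect pmin)).
- by rewrite horner_comp hornerN hornerX oppr0.
- by rewrite MsetN.
move=> m /Mset_halfK mK; rewrite /f add0r -eqr_oppLR -{2}mK.
by congr (_ == _)%:R; ring.
Qed.
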